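(* Among the $q-1$ $T$-sls-pencils there is exactly one Type-II-$T$-sls-pencil and there are $q-2$ Type-III-$T$-sls-pencils. Moreover: (1) if $q$ is even, the Type-II-$T$-sls-pencil meets the line $m_T$ in a Type-II-$T$-sls, and each Type-III-$T$-sls-pencil meets $m_T$ in a Type-III-$T$-sls; (2) if $q$ is odd, the Type-II-$T$-sls-pencil meets $m_T$ in a Type-III-$T$-sls, one Type-III-$T$-sls-pencil meets $m_T$ in a Type-II-$T$-sls, and the remaining $q-3$ Type-III-$T$-sls-pencils meet $m_T$ in Type-III-$T$-slses.
   Context: Let $q$ be a prime power, $\mathbb{F}_{q^3}^*=\mathbb{F}_{q^3}\setminus\{0\}$. Points of $\mathrm{PG}(2,q^3)$ have homogeneous coordinates $(x,y,z)$ and lines $[a,b,c]$. Let $\phi$ be the collineation $(x,y,z)\mapsto(z^q,x^q,y^q)$, acting on lines by $[d,e,f]\mapsto[f^q,d^q,e^q]$; its fixed points form the subplane $\mathcal P_{2,q}=\{(x,x^q,x^{q^2}):x\in\mathbb{F}_{q^3}^*\}$. A point has Type I, II or III according as its $\phi$-orbit is one point, three collinear points, or three non-collinear points; a line has Type I, II or III according as its $\phi$-orbit is one line, three concurrent lines, or three non-concurrent lines. Let $T=(0,0,1)$, $T^\phi=(1,0,0)$, $T^{\phi^2}=(0,1,0)$ and $m_T=T^\phi T^{\phi^2}$ the line $[0,0,1]$. Let $\mathsf S_T=\{\psi_t:t\in\mathbb{F}_{q^3}^*\}$ where $\psi_t:(x,y,z)\mapsto(tx,t^qy,t^{q^2}z)$.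 A $T$-sls is a point orbit of $\mathsf S_T$ of size $q^2+q+1$ contained in $m_T$ (there are $q-1$ of them, namely the sets $\{(x\theta,x^q,0):x\in\mathbb{F}_{q^3}^*\}$, $\theta\in\mathbb{F}_{q^3}^*$); it is Type-X if all its points have Type X. For a $T$-sls $\mathcal S$, the pencil $T\mathcal S=\{TX:X\in\mathcal S\}$ is a $T$-sls-pencil (it meets $m_T$ in $\mathcal S$); it is called Type-X if all its lines have Type X. *)

From mathcomp Require Import all_boot all_order all_algebra all_field.
Set Implicit Arguments. Unset Strict Implicit. Unset Printing Implicit Defensive.
Import GRing.Theory.
Local Open Scope ring_scope.

Section PG.
Variable F : finFieldType.

(* homogeneous coordinate vectors (x,y,z) = ((x,y),z) *)
Definition vec := (F * F * F)%type.
Definition vzero : vec := (0, 0, 0).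

Definition scalev (a : F) (v : vec) : vec := (a * v.1.1, a * v.1.2, a * v.2).

(* the projective point (or line) with coordinate vector v: the set of all
   nonzero scalar multiples of v *)
Definition pt (v : vec) : {set vec} := [set scalev a v | a : F & a != 0].

Definition is_pt (P : {set vec}) : bool :=
  [exists v : vec, (v != vzero) && (P == pt v)].
Definition is_line := is_pt.

Definition dot (v w : vec) : F := v.1.1 * w.1.1 + v.1.2 * w.1.2 + v.2 * w.2.

Definition incident (P L : {set vec}) : bool :=
  [exists v in P, exists w in L, dot v w == 0].

(* the collineation phi : (x,y,z) |-> (z^q, x^q, y^q); on lines the same
   formula [d,e,f] |-> [f^q, d^q, e^q] *)
Definition phiv (q : nat) (v : vec) : vec := (v.2 ^+ q, v.1.1 ^+ q, v.1.2 ^+ q).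
Definition phis (q : nat) (P : {set vec}) : {set vec} := [set phiv q v | v in P].

(* phi-orbit (phi^3 = id on PG(2,q^3)) *)
Definition phi_orbit (q : nat) (P : {set vec}) : {set {set vec}} :=
  [set P; phis q P; phis q (phis q P)].

Definition collinear3 (P Q R : {set vec}) : bool :=
  [exists L : {set vec}, [&& is_line L, incident P L, incident Q L & incident R L]].
Definition concurrent3 (L M N : {set vec}) : bool :=
  [exists P : {set vec}, [&& is_pt P, incident P L, incident P M & incident P N]].

Definition typeI_pt q P := #|phi_orbit q P| == 1%N.
Definition typeII_pt q P :=
  (#|phi_orbit q P| == 3%N) && collinear3 P (phis q P) (phis q (phis q P)).
Definition typeIII_pt q P :=
  (#|phi_orbit q P| == 3%N) && ~~ collinear3 P (phis q P) (phis q (phis q P)).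

Definition typeI_line q L := #|phi_orbit q L| == 1%N.
Definition typeII_line q L :=
  (#|phi_orbit q L| == 3%N) && concurrent3 L (phis q L) (phis q (phis q L)).
Definition typeIII_line q L :=
  (#|phi_orbit q L| == 3%N) && ~~ concurrent3 L (phis q L) (phis q (phis q L)).

Definition T : {set vec} := pt (0, 0, 1).
Definition mT : {set vec} := pt (0, 0, 1).        (* line [0,0,1] = T^phi T^phi^2 *)

Definition psiv (q : nat) (t : F) (v : vec) : vec :=
  (t * v.1.1, t ^+ q * v.1.2, t ^+ (q ^ 2) * v.2).

(* the orbit of the point P under the group S_T *)
Definition ST_orbit (q : nat) (P : {set vec}) : {set {set vec}} :=
  [set [set psiv q t v | v in P] | t : F & t != 0].

Definition Tsls (q : nat) : {set {set {set vec}}} :=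
  [set O : {set {set vec}} |
     [exists P : {set vec}, is_pt P && (O == ST_orbit q P)]
     && (#|O| == (q ^ 2 + q + 1)%N) && [forall X in O, incident X mT]].

(* the T-sls-pencil TS = { TX : X in S } *)
Definition Tpencil (S : {set {set vec}}) : {set {set vec}} :=
  [set L : {set vec} | [&& is_line L, incident T L & [exists X in S, incident X L]]].

Definition typeII_sls q (S : {set {set vec}}) := [forall X in S, typeII_pt q X].
Definition typeIII_sls q (S : {set {set vec}}) := [forall X in S, typeIII_pt q X].
Definition typeII_pencil q (Pc : {set {set vec}}) := [forall L in Pc, typeII_line q L].
Definition typeIII_pencil q (Pc : {set {set vec}}) := [forall L in Pc, typeIII_line q L].

End PG.

(* The norm N(s) = s^(1+q+q^2) maps F_(q^3)^* onto F_q^* with kernel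
   {t / t^q}, both by counting roots of unity.  Since psi_t sends the point
   (s,1,0) of m_T to (s t/t^q, 1, 0), the T-slses are the q-1 fibres of N on
   the points (s,1,0), and the T-sls-pencil over the fibre N = n consists of
   the lines [1,-s,0], N(s) = n.  The phi-orbit of (s,1,0) is
   (s,1,0), (0,s^q,1), (1,0,s^(q^2)), collinear iff 1 + N(s) = 0; that of
   [1,-s,0] is concurrent iff 1 - N(s) = 0.  So the Type-II pencil is the
   fibre over 1 and the Type-II sls the fibre over -1, and these coincide
   exactly when q is even. *)

From mathcomp Require Import all_boot all_order all_algebra all_field ring zify.
Set Implicit Arguments. Unset Strict Implicit. Unset Printing Implicit Defensive.
Import GRing.Theory.

Lemma mul_leq_eq a b m n :
  0 < m -> 0 < n -> a <= m -> b <= n -> a * b = m * n -> a = m /\ b = n.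
Proof. nia. Qed.

Lemma cards3 (T : finType) (x y z : T) :
  x != y -> x != z -> y != z -> #|[set x; y; z]| = 3%N.
Proof. by move=> xy xz yz; rewrite -setUA cardsU1 cards2 !inE negb_or xy xz yz. Qed.

Local Open Scope ring_scope.

Section ProjectivePlane.
Variable F : finFieldType.
Implicit Types (a b c : F) (u v w : vec F).

Lemma scalev1 v : scalev 1 v = v.
Proof. by case: v => [[x y] z]; rewrite /scalev /= !mul1r. Qed.

Lemma scalevA a b v : scalev a (scalev b v) = scalev (a * b) v.
Proof. by case: v => [[x y] z]; rewrite /scalev /= !mulrA. Qed.

Lemma pt_self v : v \in pt v.
Proof. by apply/imsetP; exists 1; rewrite ?inE ?oner_neq0 ?scalev1. Qed.

Lemma pt_scale a v : a != 0 -> pt (scalev a v) = pt v.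
Proof.
move=> a0; apply/setP => w; apply/imsetP/imsetP => -[b]; rewrite inE => b0 ->.
  by exists (b * a); rewrite ?inE ?mulf_neq0 ?scalevA.
by exists (b / a); rewrite ?inE ?mulf_neq0 ?invr_eq0 // scalevA divfK.
Qed.

Lemma pt_eq v w : pt v = pt w -> exists2 a, a != 0 & w = scalev a v.
Proof. by move=> e; have := pt_self w; rewrite -e => /imsetP[a]; rewrite inE; exists a. Qed.

Lemma pt_neq_coord (f : vec F -> F) v w :
  (forall a u, f (scalev a u) = a * f u) -> (f v == 0) != (f w == 0) -> pt v != pt w.
Proof.
move=> fZ; apply: contra => /eqP /pt_eq [a a0 ->].
by rewrite fZ mulf_eq0 (negbTE a0).
Qed.

Lemma dotC v w : dot v w = dot w v.
Proof. by rewrite /dot ![_ * v.1.1]mulrC ![_ * v.1.2]mulrC [_ * v.2]mulrC. Qed.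

Lemma dot_scale a b v w : dot (scalev a v) (scalev b w) = a * b * dot v w.
Proof. by rewrite /dot /scalev /=; ring. Qed.

Lemma incident_pt v w : incident (pt v) (pt w) = (dot v w == 0).
Proof.
apply/existsP/idP => [[_ /andP[/imsetP[a + ->]]] | vw0].
  rewrite inE => a0 /existsP[_ /andP[/imsetP[b + ->]]]; rewrite inE => b0.
  by rewrite dot_scale !mulf_eq0 (negbTE a0) (negbTE b0).
by exists v; rewrite pt_self; apply/existsP; exists w; rewrite pt_self.
Qed.

Lemma is_ptP (P : {set vec F}) : reflect (exists2 v, v != vzero F & P = pt v) (is_pt P).
Proof.
apply: (iffP existsP) => [[v /andP[v0 /eqP ->]] | [v v0 ->]]; first by exists v.
by exists v; rewrite v0 eqxx.
Qed.

Lemma collinear3_pt u v w :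
  collinear3 (pt u) (pt v) (pt w) =
  [exists l, [&& l != vzero F, dot u l == 0, dot v l == 0 & dot w l == 0]].
Proof.
apply/existsP/existsP => [[L /and4P[/is_ptP[l l0 ->]]] | [l /and4P[l0 ul vl wl]]].
  by rewrite !incident_pt => ul vl wl; exists l; rewrite l0 ul vl wl.
by exists (pt l); rewrite !incident_pt ul vl wl !andbT; apply/is_ptP; exists l.
Qed.

Lemma concurrent3_collinear3 u v w :
  concurrent3 (pt u) (pt v) (pt w) = collinear3 (pt u) (pt v) (pt w).
Proof.
rewrite collinear3_pt; apply/existsP/existsP => [[P] | [l /and4P[l0 ul vl wl]]].
  case/and4P => /is_ptP[l l0 ->]; rewrite !incident_pt => lu lv lw.
  by exists l; rewrite l0 dotC lu dotC lv dotC lw.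
by exists (pt l); rewrite !incident_pt dotC ul dotC vl dotC wl !andbT; apply/is_ptP; exists l.
Qed.

Lemma collinear3_cyclic a b c :
  collinear3 (pt (a, 1, 0)) (pt (0, b, 1)) (pt (1, 0, c)) = (1 + a * b * c == 0).
Proof.
rewrite collinear3_pt; apply/existsP/idP => [[[[x y] z]] | abc0].
  rewrite /dot /= !(mulr0, mul0r, mulr1, mul1r, addr0, add0r).
  case/and4P=> l0 /eqP ax_y /eqP by_z /eqP x_cz.
  have ey : y = - (a * x) by apply/eqP; rewrite -addr_eq0 addrC ax_y.
  have ez : z = a * b * x by apply/eqP; rewrite -subr_eq0 -by_z ey; apply/eqP; ring.
  apply: contraR l0 => abc; apply/eqP; have: x * (1 + a * b * c) = 0.
    by rewrite -x_cz ez; ring.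
  by move/eqP; rewrite mulf_eq0 (negbTE abc) orbF ez ey => /eqP ->; rewrite !(mulr0, oppr0).
exists (1, - a, a * b); rewrite /dot /=; apply/and4P; split.
- by apply/eqP => -[/eqP]; rewrite oner_eq0.
- by apply/eqP; ring.
- by apply/eqP; ring.
- by apply/eqP; transitivity (1 + a * b * c); [ring | exact/eqP].
Qed.

Lemma concurrent3_cyclic a b c :
  concurrent3 (pt (1, a, 0)) (pt (0, 1, b)) (pt (c, 0, 1)) = (1 + a * b * c == 0).
Proof.
rewrite concurrent3_collinear3 collinear3_pt; apply/existsP/idP => [[[[x y] z]] | abc0].
  rewrite /dot /= !(mulr0, mul0r, mulr1, mul1r, addr0, add0r).
  case/and4P=> l0 /eqP x_ay /eqP y_bz /eqP cx_z.
  have ey : y = - (b * z) by apply/eqP; rewrite -addr_eq0 y_bz.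
  have ex : x = a * b * z by apply/eqP; rewrite -subr_eq0 -x_ay ey; apply/eqP; ring.
  apply: contraR l0 => abc; apply/eqP; have: z * (1 + a * b * c) = 0.
    by rewrite -cx_z ex; ring.
  by move/eqP; rewrite mulf_eq0 (negbTE abc) orbF ex ey => /eqP ->; rewrite !(mulr0, oppr0).
exists (a * b, - b, 1); rewrite /dot /=; apply/and4P; split.
- by apply/eqP => -[_ _ /eqP]; rewrite oner_eq0.
- by apply/eqP; ring.
- by apply/eqP; ring.
- by apply/eqP; transitivity (1 + a * b * c); [ring | exact/eqP].
Qed.

Lemma card_pt_cyclic a b c : #|[set pt (a, 1, 0); pt (0, b, 1); pt (1, 0, c)]| = 3%N.
Proof.
by apply: cards3; [apply: (pt_neq_coord (f := snd)) | apply: (pt_neq_coord (f := snd \o fst))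
  | apply: (pt_neq_coord (f := fst \o fst))]; rewrite //= eqxx oner_eq0.
Qed.

Lemma card_line_cyclic a b c : #|[set pt (1, a, 0); pt (0, 1, b); pt (c, 0, 1)]| = 3%N.
Proof.
by apply: cards3; [apply: (pt_neq_coord (f := fst \o fst)) | apply: (pt_neq_coord (f := snd))
  | apply: (pt_neq_coord (f := snd \o fst))]; rewrite //= eqxx oner_eq0.
Qed.

Lemma incident_mT v : incident (pt v) (mT F) = (v.2 == 0).
Proof. by rewrite /mT incident_pt /dot /= !mulr0 !add0r mulr1. Qed.

End ProjectivePlane.

Section MultiplicativeCounting.
Variable F : finFieldType.

Lemma card_unity_roots_le m : (0 < m)%N -> (#|[set x : F | x ^+ m == 1%R]| <= m)%N.
Proof.
move=> m0; rewrite cardE; apply: max_unity_roots => //; last exact: enum_uniq.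
by apply/allP => x; rewrite mem_enum inE unity_rootE.
Qed.

Variable f : F -> F.
Hypothesis fM : {morph f : x y / x * y}.
Hypothesis f_eq0 : forall x, (f x == 0) = (x == 0).

Lemma mulhom_fiber x0 : x0 != 0 ->
  [set x | f x == f x0] = [set x0 * k | k in [set x | f x == 1]].
Proof.
move=> x00; have fx00 : f x0 != 0 by rewrite f_eq0.
apply/setP => x; rewrite inE; apply/eqP/imsetP => [fx | [k]].
  exists (x / x0); last by rewrite mulrC divfK.
  by rewrite inE; apply/eqP; apply: (mulIf fx00); rewrite -fM divfK // mul1r.
by rewrite inE => /eqP fk ->; rewrite fM fk mulr1.
Qed.

Lemma card_units_mulhom :
  #|[set x : F | x != 0]| = (#|f @: [set x : F | x != 0%R]| * #|[set x | f x == 1%R]|)%N.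
Proof.
rewrite -sum1_card (partition_big_imset f) /= -sum_nat_const.
apply: eq_bigr => y /imsetP[x0]; rewrite inE => x00 ->.
rewrite sum1dep_card -[RHS](card_imset _ (mulfI x00)) -mulhom_fiber //.
apply: eq_card => x; rewrite !inE andb_idl // => /eqP fx.
by rewrite -f_eq0 fx f_eq0.
Qed.
End MultiplicativeCounting.

Section CubicExtension.
Variables (F : finFieldType) (q : nat).
Hypothesis hF : #|F| = (q ^ 3)%N.
Implicit Types (a s t x : F) (v : vec F).

Lemma q_gt1 : (1 < q)%N.
Proof. by move: (finNzRing_gt1 F); rewrite hF; case: q => [|[|]]. Qed.

Lemma expr_q3 x : x ^+ (q ^ 3) = x.
Proof. by rewrite -hF expf_card. Qed.

Lemma exprqK x : (x ^+ q) ^+ (q ^ 2) = x.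
Proof. by rewrite -exprM -expnS expr_q3. Qed.

Lemma expr_q2K x : (x ^+ (q ^ 2)) ^+ q = x.
Proof. by rewrite -exprM -expnSr expr_q3. Qed.

Lemma phiv_scale a v : phiv q (scalev a v) = scalev (a ^+ q) (phiv q v).
Proof. by rewrite /phiv /scalev /= !exprMn. Qed.

Lemma phis_pt v : phis q (pt v) = pt (phiv q v).
Proof.
apply/setP => w; apply/imsetP/imsetP => [[_ /imsetP[a + ->] ->] | [b + ->]].
  by rewrite inE => a0; exists (a ^+ q); rewrite ?phiv_scale // inE expf_neq0.
rewrite inE => b0; exists (scalev (b ^+ (q ^ 2)) v); last by rewrite phiv_scale expr_q2K.
by apply/imsetP; exists (b ^+ (q ^ 2)); rewrite // inE expf_neq0.
Qed.

Lemma psiv_scale t a v : psiv q t (scalev a v) = scalev a (psiv q t v).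
Proof. by rewrite /psiv /scalev /=; congr (_, _, _); rewrite mulrCA. Qed.

Lemma psis_pt t v : [set psiv q t w | w in pt v] = pt (psiv q t v).
Proof.
apply/setP => w; apply/imsetP/imsetP => [[_ /imsetP[a a0 ->] ->] | [a a0 ->]].
  by exists a; rewrite ?psiv_scale.
by exists (scalev a v); rewrite ?psiv_scale //; apply/imsetP; exists a.
Qed.

Definition norm3 s := s * s ^+ q * s ^+ (q ^ 2).

Lemma norm3E s : norm3 s = s ^+ (q ^ 2 + q + 1).
Proof. by rewrite /norm3 !exprD expr1; ring. Qed.

Lemma norm3M : {morph norm3 : s t / s * t}.
Proof. by move=> s t; rewrite /norm3 !exprMn; ring. Qed.

Lemma norm3_eq0 s : (norm3 s == 0) = (s == 0).
Proof. by rewrite norm3E expf_eq0 addn1. Qed.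

Lemma norm3_frob s : norm3 (s ^+ q) = norm3 s.
Proof. by rewrite /norm3 -exprM mulnn exprqK; ring. Qed.

Lemma norm3N s : norm3 (- s) = - norm3 s.
Proof. by rewrite !norm3E exprNn -signr_odd !oddD oddX addbb expr1 mulN1r. Qed.

Lemma norm3_1 : norm3 1 = 1.
Proof. by rewrite /norm3 !expr1n !mul1r. Qed.

Definition norm_image := norm3 @: [set x : F | x != 0].
Definition norm_kernel := [set x : F | norm3 x == 1].

Lemma units_exponent : ((q - 1) * (q ^ 2 + q + 1))%N = (q ^ 3).-1.
Proof. by have := q_gt1; rewrite !expnS expn0; nia. Qed.

Lemma card_units : #|[set x : F | x != 0]| = ((q - 1) * (q ^ 2 + q + 1))%N.
Proof.
have -> : [set x : F | x != 0] = [set~ 0] by apply/setP => x; rewrite !inE.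
by rewrite cardsC1 hF units_exponent.
Qed.

Lemma expr_q3_pred x : x != 0 -> x ^+ (q ^ 3).-1 = 1.
Proof.
move=> x0; apply: (mulIf x0); rewrite -exprSr prednK ?expr_q3 ?mul1r //.
by rewrite expn_gt0 ltnW ?q_gt1.
Qed.

Lemma card_norm_image_kernel :
  #|norm_image| = (q - 1)%N /\ #|norm_kernel| = (q ^ 2 + q + 1)%N.
Proof.
have q1_gt0 : (0 < q - 1)%N by rewrite subn_gt0 q_gt1.
have n_gt0 : (0 < q ^ 2 + q + 1)%N by rewrite addn1.
apply: mul_leq_eq => //; last by rewrite -card_units (card_units_mulhom norm3M norm3_eq0).
- apply: leq_trans (card_unity_roots_le F q1_gt0); apply/subset_leq_card/subsetP.
  move=> y /imsetP[s]; rewrite !inE => s0 ->.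
  by rewrite norm3E -exprM mulnC units_exponent expr_q3_pred.
- apply: leq_trans (card_unity_roots_le F n_gt0); apply/subset_leq_card/subsetP.
  by move=> s; rewrite !inE norm3E.
Qed.

Lemma hilbert90 : [set t / t ^+ q | t in [set x : F | x != 0]] = norm_kernel.
Proof.
have q_gt0 : (0 < q)%N by rewrite ltnW ?q_gt1.
have q1_gt0 : (0 < q - 1)%N by rewrite subn_gt0 q_gt1.
pose g t := t / t ^+ q.
have gM : {morph g : s t / s * t} by move=> s t; rewrite /g exprMn invfM mulrACA.
have g_eq0 t : (g t == 0) = (t == 0).
  by rewrite /g mulf_eq0 invr_eq0 expf_eq0 q_gt0 orbb.
have g_norm1 : g @: [set x | x != 0] \subset norm_kernel.
  apply/subsetP => y /imsetP[t]; rewrite !inE => t0 ->.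
  have nt0 : norm3 (t ^+ q) != 0 by rewrite norm3_eq0 expf_neq0.
  by apply/eqP/(mulIf nt0); rewrite mul1r -norm3M /g divfK ?expf_neq0 ?norm3_frob.
have [_ card_ker] := card_norm_image_kernel.
have [card_img _] : #|g @: [set x | x != 0]| = (q ^ 2 + q + 1)%N /\
                    #|[set t | g t == 1]| = (q - 1)%N.
  apply: mul_leq_eq => //; first by rewrite addn1.
  - by rewrite -card_ker subset_leq_card.
  - apply: leq_trans (card_unity_roots_le F q1_gt0); apply/subset_leq_card/subsetP.
    move=> t; rewrite !inE /g => /eqP gt1.
    have t0 : t != 0 by apply: contra_eq_neq gt1 => ->; rewrite mul0r eq_sym oner_eq0.
    have tq : t ^+ q = t by rewrite -[RHS](divfK (expf_neq0 q t0)) gt1 mul1r.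
    by apply/eqP/(mulIf t0); rewrite mul1r -exprSr subn1 prednK.
  - by rewrite [RHS]mulnC -card_units (card_units_mulhom gM g_eq0).
by apply/eqP; rewrite eqEcard g_norm1 card_img card_ker leqnn.
Qed.

Lemma expr0q : (0 : F) ^+ q = 0.
Proof. by rewrite expr0n gtn_eqF // ltnW ?q_gt1. Qed.

Definition mTpoint s : {set vec F} := pt (s, 1, 0).
Definition Tline s : {set vec F} := pt (1, - s, 0).

Lemma mTpoint_inj : injective mTpoint.
Proof. by move=> r s /pt_eq[a _ [-> a1 _]]; rewrite -[a]mulr1 -a1 mul1r. Qed.

Lemma Tline_inj : injective Tline.
Proof.
by move=> r s /pt_eq[a _ [a1 e _]]; apply: oppr_inj; rewrite e -[a]mulr1 -a1 mul1r.
Qed.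

Lemma phis_mTpoint s : phis q (mTpoint s) = pt (0, s ^+ q, 1).
Proof. by rewrite phis_pt /phiv /= expr0q expr1n. Qed.

Lemma phis2_mTpoint s : phis q (phis q (mTpoint s)) = pt (1, 0, s ^+ (q ^ 2)).
Proof. by rewrite phis_mTpoint phis_pt /phiv /= expr0q expr1n -exprM mulnn. Qed.

Lemma phis_Tline s : phis q (Tline s) = pt (0, 1, (- s) ^+ q).
Proof. by rewrite phis_pt /phiv /= expr0q expr1n. Qed.

Lemma phis2_Tline s : phis q (phis q (Tline s)) = pt ((- s) ^+ (q ^ 2), 0, 1).
Proof. by rewrite phis_Tline phis_pt /phiv /= expr0q expr1n -exprM mulnn. Qed.

Lemma typeII_mTpoint s : typeII_pt q (mTpoint s) = (norm3 s == -1).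
Proof.
rewrite /typeII_pt /phi_orbit phis2_mTpoint phis_mTpoint card_pt_cyclic.
by rewrite collinear3_cyclic addrC addr_eq0.
Qed.

Lemma typeIII_mTpoint s : typeIII_pt q (mTpoint s) = (norm3 s != -1).
Proof.
rewrite /typeIII_pt /phi_orbit phis2_mTpoint phis_mTpoint card_pt_cyclic.
by rewrite collinear3_cyclic addrC addr_eq0.
Qed.

Lemma typeII_Tline s : typeII_line q (Tline s) = (norm3 s == 1).
Proof.
rewrite /typeII_line /phi_orbit phis2_Tline phis_Tline card_line_cyclic.
by rewrite concurrent3_cyclic -[_ * _ * _]/(norm3 (- s)) norm3N subr_eq0 eq_sym.
Qed.

Lemma typeIII_Tline s : typeIII_line q (Tline s) = (norm3 s != 1).
Proof.
rewrite /typeIII_line /phi_orbit phis2_Tline phis_Tline card_line_cyclic.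
by rewrite concurrent3_cyclic -[_ * _ * _]/(norm3 (- s)) norm3N subr_eq0 eq_sym.
Qed.

Lemma psis_mTpoint t r :
  t != 0 -> [set psiv q t v | v in mTpoint r] = mTpoint (r * (t / t ^+ q)).
Proof.
move=> t0; rewrite psis_pt /mTpoint -[RHS](pt_scale _ (expf_neq0 q t0)) /psiv /scalev /=.
by rewrite !mulr0 !mulr1 (mulrCA _ r) (mulrCA _ t) mulfV ?expf_neq0 // mulr1 mulrC.
Qed.

Definition sls_of_norm n := mTpoint @: [set s | norm3 s == n].
Definition pencil_of_norm n := Tline @: [set s | norm3 s == n].

Lemma ST_orbit_mTpoint r : r != 0 -> ST_orbit q (mTpoint r) = sls_of_norm (norm3 r).
Proof.
move=> r0; rewrite /sls_of_norm (mulhom_fiber norm3M norm3_eq0 r0) -/norm_kernel.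
rewrite -hilbert90 -!imset_comp.
by apply: eq_in_imset => t; rewrite inE => t0; apply: psis_mTpoint.
Qed.

Lemma card_sls_of_norm r : r != 0 -> #|sls_of_norm (norm3 r)| = (q ^ 2 + q + 1)%N.
Proof.
move=> r0; rewrite /sls_of_norm (mulhom_fiber norm3M norm3_eq0 r0).
by rewrite !card_imset; [case: card_norm_image_kernel | apply: mulfI | apply: mTpoint_inj].
Qed.

Lemma ST_orbit_self (P : {set vec F}) : P \in ST_orbit q P.
Proof.
have psiv1 : psiv q (1 : F) =1 id by case=> [[x y] z]; rewrite /psiv !expr1n !mul1r.
by apply/imsetP; exists 1; rewrite ?inE ?oner_neq0 // (eq_imset _ psiv1) imset_id.
Qed.

Lemma ST_orbit_fixed v :
  (forall t, t != 0 -> exists2 c, c != 0 & psiv q t v = scalev c v) ->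
  ST_orbit q (pt v) = [set pt v].
Proof.
move=> fix_v; apply/setP => X; rewrite inE; apply/imsetP/eqP => [[t] | ->].
  by rewrite inE psis_pt => /fix_v[c c0 ->] ->; rewrite pt_scale.
by move: (ST_orbit_self (pt v)) => /imsetP.
Qed.

Lemma ST_orbit_on_mT P :
  is_pt P -> #|ST_orbit q P| = (q ^ 2 + q + 1)%N ->
  {in ST_orbit q P, forall X, incident X (mT F)} -> exists2 r, r != 0 & P = mTpoint r.
Proof.
case/is_ptP => -[[a b] c] _ -> cardO onmT.
have /eqP c0 : c == 0 by rewrite -(incident_mT (a, b, c)) onmT ?ST_orbit_self.
have orbit_gt1 : (1 < #|ST_orbit q (pt (a, b, c))|)%N.
  by rewrite cardO addn1 ltnS addn_gt0 orbC ltnW ?q_gt1.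
subst c; have [a0 | a0] := eqVneq a 0.
  move: orbit_gt1; rewrite a0 ST_orbit_fixed ?cards1 // => t t0.
  by exists (t ^+ q); rewrite ?expf_neq0 // /psiv /scalev /= !mulr0.
have [b0 | b0] := eqVneq b 0.
  move: orbit_gt1; rewrite b0 ST_orbit_fixed ?cards1 // => t t0.
  by exists t; rewrite // /psiv /scalev /= !mulr0.
exists (a / b); first by rewrite mulf_neq0 ?invr_eq0.
by rewrite /mTpoint -[RHS](pt_scale _ b0) /scalev /= mulr1 mulr0 mulrC divfK.
Qed.

Lemma Tsls_eq : Tsls F q = sls_of_norm @: norm_image.
Proof.
apply/setP => O; rewrite inE -andbA; apply/and3P/imsetP.
  case=> /existsP[P /andP[P_pt /eqP ->]] /eqP cardO /forallP onmT.
  have [r r0 ->] := ST_orbit_on_mT P_pt cardO (fun X => implyP (onmT X)).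
  by exists (norm3 r); [apply: imset_f; rewrite inE | apply: ST_orbit_mTpoint].
case=> n /imsetP[r]; rewrite inE => r0 -> ->; split.
- apply/existsP; exists (mTpoint r); rewrite ST_orbit_mTpoint // eqxx andbT.
  by apply/is_ptP; exists (r, 1, 0) => //; apply/eqP => -[_ /eqP]; rewrite oner_eq0.
- by rewrite card_sls_of_norm.
- by apply/forallP => X; apply/implyP => /imsetP[s _ ->]; rewrite /mTpoint incident_mT.
Qed.

Lemma Tpencil_mTpoints (A : {set F}) : Tpencil (mTpoint @: A) = Tline @: A.
Proof.
apply/setP => L; rewrite inE; apply/and3P/imsetP => [[/is_ptP[[[a b] c] l0 ->]] | [s sA ->]].
  move=> TL /existsP[_ /andP[/imsetP[s sA ->] sL]]; exists s => //.
  move: TL sL; rewrite /T /mTpoint !incident_pt /dot /= !(mul0r, mul1r, add0r, addr0).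
  move=> /eqP c0 /eqP sab.
  have eb : b = - (s * a) by apply/eqP; rewrite -addr_eq0 addrC sab.
  have a0 : a != 0 by apply: contraNneq l0 => a0; rewrite c0 eb a0 mulr0 oppr0.
  by rewrite /Tline -[RHS](pt_scale _ a0) /scalev /= mulr1 mulr0 c0 eb mulrN mulrC.
split.
- by apply/is_ptP; exists (1, - s, 0) => //; apply/eqP => -[/eqP]; rewrite oner_eq0.
- by rewrite /T /Tline incident_pt /dot /= !mul0r mulr0 !addr0.
- apply/existsP; exists (mTpoint s); rewrite imset_f //=.
  by rewrite /mTpoint /Tline incident_pt /dot /= mulr1 mul1r mulr0 addr0 addrN.
Qed.

Lemma forall_norm_fiber (G : F -> {set vec F}) (P : pred {set vec F}) (R : pred F) n :
  n \in norm_image -> (forall s, P (G s) = R (norm3 s)) ->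
  [forall X in G @: [set s | norm3 s == n], P X] = R n.
Proof.
case/imsetP => r _ -> PG; apply/forallP/idP => [/(_ (G r)) | Rr X].
  by rewrite imset_f ?inE //= PG.
by apply/implyP => /imsetP[s + ->]; rewrite inE PG => /eqP ->.
Qed.

Lemma typeII_sls_of_norm n : n \in norm_image -> typeII_sls q (sls_of_norm n) = (n == -1).
Proof. by move=> nI; apply: (forall_norm_fiber (R := eq_op^~ (-1))) nI typeII_mTpoint. Qed.

Lemma typeIII_sls_of_norm n : n \in norm_image -> typeIII_sls q (sls_of_norm n) = (n != -1).
Proof.
by move=> nI; apply: (forall_norm_fiber (R := fun m => m != -1)) nI typeIII_mTpoint.
Qed.

Lemma typeII_Tpencil_sls n :
  n \in norm_image -> typeII_pencil q (Tpencil (sls_of_norm n)) = (n == 1).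
Proof.
by move=> nI; rewrite Tpencil_mTpoints; apply: (forall_norm_fiber (R := eq_op^~ 1)) nI typeII_Tline.
Qed.

Lemma typeIII_Tpencil_sls n :
  n \in norm_image -> typeIII_pencil q (Tpencil (sls_of_norm n)) = (n != 1).
Proof.
move=> nI; rewrite Tpencil_mTpoints.
by apply: (forall_norm_fiber (R := fun m => m != 1)) nI typeIII_Tline.
Qed.

Lemma Tpencil_sls_inj : {in norm_image &, injective (fun n => Tpencil (sls_of_norm n))}.
Proof.
move=> _ n /imsetP[r r0 ->] _; rewrite /= !Tpencil_mTpoints => e.
have : Tline r \in Tline @: [set s | norm3 s == n] by rewrite -e imset_f ?inE.
by case/imsetP => s; rewrite inE => /eqP <- /Tline_inj ->.
Qed.

Lemma Tpencils_eq (P : pred {set {set vec F}}) :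
  [set Tpencil S | S in Tsls F q & P S] =
  [set Tpencil (sls_of_norm n) | n in norm_image & P (sls_of_norm n)].
Proof.
apply/setP => L; apply/imsetP/imsetP => [[S] | [n]]; rewrite inE.
  by case/andP; rewrite Tsls_eq => /imsetP[n nI ->] PS ->; exists n; rewrite ?inE ?nI.
by case/andP => nI Pn ->; exists (sls_of_norm n); rewrite // inE Tsls_eq imset_f.
Qed.

Lemma card_Tpencils (P : pred {set {set vec F}}) (R : pred F) :
  {in norm_image, forall n, P (sls_of_norm n) = R n} ->
  #|[set Tpencil S | S in Tsls F q & P S]| = #|[set n in norm_image | R n]|.
Proof.
move=> PR; rewrite Tpencils_eq card_in_imset => [|m n]; last first.
  by rewrite !inE => /andP[mI _] /andP[nI _]; apply: Tpencil_sls_inj.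
by apply: eq_card => n; rewrite !inE; case: (boolP (n \in _)) => //= /PR.
Qed.

Lemma one_in_norm_image : 1 \in norm_image.
Proof. by apply/imsetP; exists 1; rewrite ?inE ?oner_neq0 ?norm3_1. Qed.

Lemma oppr1_in_norm_image : -1 \in norm_image.
Proof. by apply/imsetP; exists (-1); rewrite ?inE ?oppr_eq0 ?oner_neq0 ?norm3N ?norm3_1. Qed.

Lemma card_Tsls_pencils : #|[set Tpencil S | S in Tsls F q]| = (q - 1)%N.
Proof.
have -> : Tsls F q = [set S in Tsls F q | true] by apply/setP => S; rewrite inE andbT.
rewrite (card_Tpencils (R := predT)) // -(proj1 card_norm_image_kernel).
by apply: eq_card => n; rewrite inE andbT.
Qed.

Lemma card_norm_image_D1 : #|norm_image :\ 1| = (q - 2)%N.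
Proof.
have := cardsD1 1 norm_image; rewrite one_in_norm_image (proj1 card_norm_image_kernel).
by rewrite add1n => /(congr1 predn) /= <-; rewrite -subn1 -subnDA.
Qed.

Section Parity.
Hypothesis oppr1_eq1 : ((-1 : F) == 1) = ~~ odd q.

Lemma card_typeII_Tpencils :
  #|[set Tpencil S | S in Tsls F q & typeII_pencil q (Tpencil S)]| = 1%N.
Proof.
rewrite (card_Tpencils (R := eq_op^~ 1)); last exact: typeII_Tpencil_sls.
rewrite -(cards1 (1 : F)); apply: eq_card => n; rewrite !inE.
by rewrite andb_idl // => /eqP ->; apply: one_in_norm_image.
Qed.

Lemma card_typeIII_Tpencils :
  #|[set Tpencil S | S in Tsls F q & typeIII_pencil q (Tpencil S)]| = (q - 2)%N.
Proof.
rewrite (card_Tpencils (R := fun n => n != 1)); last exact: typeIII_Tpencil_sls.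
have -> : [set n in norm_image | n != 1] = norm_image :\ 1.
  by apply/setP => n; rewrite !inE andbC.
by apply: card_norm_image_D1.
Qed.

Lemma Tpencil_types_even S : ~~ odd q -> S \in Tsls F q ->
  (typeII_pencil q (Tpencil S) -> typeII_sls q S) /\
  (typeIII_pencil q (Tpencil S) -> typeIII_sls q S).
Proof.
rewrite -oppr1_eq1 Tsls_eq => /eqP m1 /imsetP[n nI ->].
by rewrite typeII_Tpencil_sls ?typeIII_Tpencil_sls ?typeII_sls_of_norm ?typeIII_sls_of_norm ?m1.
Qed.

Lemma typeII_Tpencil_odd S :
  odd q -> S \in Tsls F q -> typeII_pencil q (Tpencil S) -> typeIII_sls q S.
Proof.
move=> q_odd; rewrite Tsls_eq => /imsetP[n nI ->].
by rewrite typeII_Tpencil_sls ?typeIII_sls_of_norm // => /eqP ->; rewrite eq_sym oppr1_eq1 q_odd.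
Qed.

Lemma card_typeIII_Tpencils_typeII_sls : odd q ->
  #|[set Tpencil S | S in Tsls F q &
       typeIII_pencil q (Tpencil S) && typeII_sls q S]| = 1%N.
Proof.
move=> q_odd; rewrite (card_Tpencils (R := fun n => (n != 1) && (n == -1))); last first.
  by move=> n nI; rewrite typeIII_Tpencil_sls ?typeII_sls_of_norm.
rewrite -(cards1 (-1 : F)); apply: eq_card => n; rewrite !inE.
have [-> | ] := eqVneq n (-1); last by rewrite !andbF.
by rewrite oppr1_in_norm_image oppr1_eq1 q_odd.
Qed.

Lemma card_typeIII_Tpencils_typeIII_sls : odd q ->
  #|[set Tpencil S | S in Tsls F q &
       typeIII_pencil q (Tpencil S) && typeIII_sls q S]| = (q - 3)%N.
Proof.
move=> q_odd; rewrite (card_Tpencils (R := fun n => (n != 1) && (n != -1))); last first.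
  by move=> n nI; rewrite typeIII_Tpencil_sls ?typeIII_sls_of_norm.
have -> : [set n in norm_image | (n != 1) && (n != -1)] = norm_image :\ 1 :\ -1.
  by apply/setP => n; rewrite !inE andbC andbA [_ && (_ != 1)]andbC.
have := cardsD1 (-1) (norm_image :\ 1); rewrite !inE oppr1_eq1 q_odd oppr1_in_norm_image.
by rewrite card_norm_image_D1 add1n => /(congr1 predn) /= <-; rewrite -subn1 -subnDA.
Qed.

End Parity.
End CubicExtension.

Lemma oppr1_eq1_card (F : finFieldType) p m :
  prime p -> #|F| = (p ^ m)%N -> ((-1 : F) == 1) = (p == 2).
Proof.
move=> p_pr cardF; rewrite -(dvdn_prime2 p_pr) // (dvdn_pcharf (card_finPcharP cardF p_pr)).
by rewrite mulr2n addr_eq0 eq_sym.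
Qed.

Theorem corollary2p4 (F : finFieldType) (q : nat)
  (hq : exists p k : nat, [/\ prime p, (0 < k)%N & q = (p ^ k)%N])
  (hF : #|F| = (q ^ 3)%N) :
  (* there are q-1 T-sls-pencils *)
  #|[set Tpencil S | S in Tsls F q]| = (q - 1)%N /\
  #|[set Tpencil S | S in Tsls F q & typeII_pencil q (Tpencil S)]| = 1%N /\
  #|[set Tpencil S | S in Tsls F q & typeIII_pencil q (Tpencil S)]| = (q - 2)%N /\
  (~~ odd q ->
     forall S, S \in Tsls F q ->
       (typeII_pencil q (Tpencil S) -> typeII_sls q S) /\
       (typeIII_pencil q (Tpencil S) -> typeIII_sls q S)) /\
  (odd q ->
     (forall S, S \in Tsls F q ->
        typeII_pencil q (Tpencil S) -> typeIII_sls q S) /\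
     #|[set Tpencil S | S in Tsls F q &
          typeIII_pencil q (Tpencil S) && typeII_sls q S]| = 1%N /\
     #|[set Tpencil S | S in Tsls F q &
          typeIII_pencil q (Tpencil S) && typeIII_sls q S]| = (q - 3)%N).
Proof.
have oppr1_eq1 : ((-1 : F) == 1) = ~~ odd q.
  case: hq => p [k [p_pr k_gt0 q_pk]]; rewrite q_pk -expnM in hF.
  rewrite (oppr1_eq1_card p_pr hF) q_pk oddX eqn0Ngt k_gt0 /=.
  exact: sameP eqP (prime_oddPn p_pr).
split; first exact: card_Tsls_pencils.
split; first exact: card_typeII_Tpencils.
split; first exact: card_typeIII_Tpencils.
split; first by move=> q_even S; apply: Tpencil_types_even.
move=> q_odd; split; first by move=> S; apply: typeII_Tpencil_odd.
split; first exact: card_typeIII_Tpencils_typeII_sls.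
exact: card_typeIII_Tpencils_typeIII_sls.
Qed.
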